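(* Let $f:[0,2\pi)\to\mathbb{R}$ be a $C^1$ function (viewed as $2\pi$-periodic). Then there exists $C=C(e_0,c)$ such that for each $q\ge3$, $$\Big|\int_0^{2\pi}f(\varphi)c_q(\varphi)\,d\varphi\Big|\le\frac{C\|f\|_{C^1}}{q}\qquad\text{and}\qquad\Big|\int_0^{2\pi}f(\varphi)s_q(\varphi)\,d\varphi\Big|\le\frac{C\|f\|_{C^1}}{q}.$$
   Context: Ellipse with semi-axes $0<b\le a$, eccentricity $e_0=\sqrt{1-b^2/a^2}\in[0,1)$, semi-focal distance $c=\sqrt{a^2-b^2}$. For $0\le k<1$, $F(\varphi;k)=\int_0^\varphi(1-k^2\sin^2\tau)^{-1/2}d\tau$, $K(k)=F(\pi/2;k)$. For $\lambda\in(0,b)$, $k_\lambda=\sqrt{(a^2-b^2)/(a^2-\lambda^2)}$, $\omega_\lambda=F(\arcsin(\lambda/b);k_\lambda)/(2K(k_\lambda))$ (strictly increasing from $0$ to $1/2$); for $q\ge3$, $\omega_{\lambda_q}=1/q$, $k_q=k_{\lambda_q}$. $c_q(\varphi)=\cos\!\big(\tfrac{2\pi q}{4K(k_q)}F(\varphi;k_q)\big)/\sqrt{1-k_q^2\sin^2\varphi}$, $s_q(\varphi)=\sin\!\big(\tfrac{2\pi q}{4K(k_q)}F(\varphi;k_q)\big)/\sqrt{1-k_q^2\sin^2\varphi}$. *)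

From Stdlib Require Import Reals.
From Coquelicot Require Import Coquelicot.
Open Scope R_scope.

Definition ellF (phi k : R) : R :=
  RInt (fun tau => / sqrt (1 - k ^ 2 * (sin tau) ^ 2)) 0 phi.
Definition ellK (k : R) : R := ellF (PI / 2) k.

(* k_lambda and omega_lambda for the ellipse with semi-axes b <= a. *)
Definition k_lam (a b lam : R) : R := sqrt ((a ^ 2 - b ^ 2) / (a ^ 2 - lam ^ 2)).
Definition omega_lam (a b lam : R) : R :=
  ellF (asin (lam / b)) (k_lam a b lam) / (2 * ellK (k_lam a b lam)).

(* c_q and s_q, given the modulus kq = k_{lambda_q}. *)
Definition c_q (q : nat) (kq phi : R) : R :=
  cos (2 * PI * INR q / (4 * ellK kq) * ellF phi kq) / sqrt (1 - kq ^ 2 * (sin phi) ^ 2).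
Definition s_q (q : nat) (kq phi : R) : R :=
  sin (2 * PI * INR q / (4 * ellK kq) * ellF phi kq) / sqrt (1 - kq ^ 2 * (sin phi) ^ 2).

Definition C1_periodic (f : R -> R) : Prop :=
  (forall x, ex_derive f x) /\ (forall x, continuous (Derive f) x) /\
  (forall x, f (x + 2 * PI) = f x).

Definition sup_norm (g : R -> R) : R :=
  real (Lub_Rbar (fun y => exists x, 0 <= x <= 2 * PI /\ y = Rabs (g x))).

Definition C1_norm (f : R -> R) : R := sup_norm f + sup_norm (Derive f).

From Stdlib Require Import Reals Lra Lia.
From Coquelicot Require Import Coquelicot.
Open Scope R_scope.

(* Since F' = (1 - k^2 sin^2)^(-1/2), putting w = 2 pi q / (4 K) gives
   c_q = (sin (w F))' / w and s_q = (- cos (w F))' / w. Integrating by parts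
   against the 2 pi-periodic f, the boundary terms cancel because F(2 pi) = 4 K
   makes w F(2 pi) = 2 pi q; hence both integrals are at most
   2 pi sup|f'| / w = 4 K sup|f'| / q. It remains to bound K uniformly:
   omega = 1/q <= 1/3 forces F(theta) <= 2K/3 for theta = arcsin(lam/b), so
   K <= 3 (pi/2 - theta) / sqrt(1 - k^2) <= 9 cos theta / sqrt(1 - k^2) <= 9 a/b. *)

Lemma abs_RInt_mul_derive_le (f h h' : R -> R) (a b M N : R) :
  a <= b ->
  (forall x, a <= x <= b -> ex_derive f x /\ continuous (Derive f) x) ->
  (forall x, a <= x <= b -> is_derive h x (h' x) /\ continuous h' x) ->
  f b * h b = f a * h a ->
  (forall x, a <= x <= b -> Rabs (Derive f x) <= M) ->
  (forall x, a <= x <= b -> Rabs (h x) <= N) ->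
  Rabs (RInt (fun x => f x * h' x) a b) <= (b - a) * (M * N).
Proof.
  intros Hab Hf Hh Hend HM HN.
  assert (Hab' : forall x, Rmin a b <= x <= Rmax a b -> a <= x <= b)
    by (rewrite Rmin_left, Rmax_right; auto).
  assert (Hf'h : ex_RInt (fun t => Derive f t * h t) a b).
  { apply (ex_RInt_continuous (V := R_CompleteNormedModule)). intros x Hx%Hab'.
    apply (continuous_mult (Derive f) h); [apply Hf, Hx|].
    apply (ex_derive_continuous h). eexists; apply Hh, Hx. }
  assert (Hparts := is_RInt_scal_derive_r f h (Derive f) h' a b _
    (fun x Hx => Derive_correct f x (proj1 (Hf x (Hab' x Hx))))
    (fun x Hx => proj1 (Hh x (Hab' x Hx)))
    (fun x Hx => proj2 (Hf x (Hab' x Hx))) (fun x Hx => proj2 (Hh x (Hab' x Hx)))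
    (RInt_correct _ _ _ Hf'h)).
  assert (Hint : RInt (fun x => f x * h' x) a b
      = f b * h b - f a * h a - RInt (fun t => Derive f t * h t) a b)
    by exact (is_RInt_unique _ _ _ _ Hparts).
  rewrite Hint, Hend, Rminus_diag, Rminus_0_l, Rabs_Ropp.
  apply abs_RInt_le_const; [exact Hab | exact Hf'h |].
  intros t Ht. rewrite Rabs_mult.
  apply Rmult_le_compat; [apply Rabs_pos | apply Rabs_pos | apply HM, Ht | apply HN, Ht].
Qed.

Lemma sin_ge_third (x : R) : 0 <= x <= 2 -> x / 3 <= sin x.
Proof.
  intros Hx. pose proof PI_4. pose proof PI2_1.
  destruct (sin_bound x 0 ltac:(lra) ltac:(lra)) as [Hs _].
  unfold sin_approx, sin_term in Hs; simpl in Hs.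
  assert (x * x <= 4) by nra. nra.
Qed.

Definition ell_integrand (k t : R) : R := / sqrt (1 - k ^ 2 * sin t ^ 2).

Lemma ellF_RInt (phi k : R) : ellF phi k = RInt (ell_integrand k) 0 phi.
Proof. reflexivity. Qed.

Lemma ellF_0 (k : R) : ellF 0 k = 0.
Proof. exact (RInt_point (V := R_CompleteNormedModule) 0 _). Qed.

Lemma ell_integrand_add_PI (k t : R) : ell_integrand k (t + PI) = ell_integrand k t.
Proof. unfold ell_integrand. rewrite neg_sin. f_equal. f_equal. ring. Qed.

Lemma ell_integrand_PI_sub (k t : R) : ell_integrand k (PI - t) = ell_integrand k t.
Proof. unfold ell_integrand. rewrite sin_PI_x. reflexivity. Qed.

Section EllipticIntegral.

Variable k : R.
Hypothesis k2_lt1 : k ^ 2 < 1.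

Lemma ell_radicand_gt0 (t : R) : 0 < 1 - k ^ 2 * sin t ^ 2.
Proof.
  assert (0 <= sin t ^ 2 <= 1) by (pose proof (SIN_bound t); split; nra).
  pose proof (pow2_ge_0 k). nra.
Qed.

Lemma ell_integrand_gt0 (t : R) : 0 < ell_integrand k t.
Proof. apply Rinv_0_lt_compat, sqrt_lt_R0, ell_radicand_gt0. Qed.

Lemma ell_integrand_le (t : R) : ell_integrand k t <= / sqrt (1 - k ^ 2).
Proof.
  apply Rinv_le_contravar; [apply sqrt_lt_R0; lra|].
  apply sqrt_le_1_alt.
  assert (sin t ^ 2 <= 1) by (pose proof (SIN_bound t); nra).
  pose proof (pow2_ge_0 k). nra.
Qed.

Lemma continuous_ell_integrand (t : R) : continuous (ell_integrand k) t.
Proof.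
  apply (ex_derive_continuous (ell_integrand k)). unfold ell_integrand.
  pose proof (ell_radicand_gt0 t). auto_derive.
  repeat split; [lra | apply Rgt_not_eq, sqrt_lt_R0; lra].
Qed.

Lemma ex_RInt_ell_integrand (x y : R) : ex_RInt (ell_integrand k) x y.
Proof.
  apply (ex_RInt_continuous (V := R_CompleteNormedModule)).
  intros; apply continuous_ell_integrand.
Qed.

Lemma ellF_Chasles (x y : R) : ellF x k + RInt (ell_integrand k) x y = ellF y k.
Proof. apply (RInt_Chasles (V := R_CompleteNormedModule)); apply ex_RInt_ell_integrand. Qed.

Lemma is_derive_ellF (x : R) : is_derive (fun y => ellF y k) x (ell_integrand k x).
Proof.
  apply (is_derive_RInt (ell_integrand k) _ 0).
  - apply filter_forall. intros y.
    apply (RInt_correct (V := R_CompleteNormedModule)), ex_RInt_ell_integrand.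
  - apply continuous_ell_integrand.
Qed.

Lemma ellK_gt0 : 0 < ellK k.
Proof.
  apply RInt_gt_0; [pose proof PI_RGT_0; lra | |].
  - intros; apply ell_integrand_gt0.
  - intros; apply continuous_ell_integrand.
Qed.

Lemma ellF_2PI : ellF (2 * PI) k = 4 * ellK k.
Proof.
  assert (Hshift : RInt (ell_integrand k) PI (2 * PI) = ellF PI k).
  { assert (H := RInt_comp_lin (ell_integrand k) 1 PI 0 PI (ex_RInt_ell_integrand _ _)).
    replace (1 * 0 + PI) with PI in H by ring.
    replace (1 * PI + PI) with (2 * PI) in H by ring.
    rewrite <- H. apply RInt_ext. intros x _.
    unfold scal; simpl; unfold mult; simpl.
    rewrite !Rmult_1_l. apply ell_integrand_add_PI. }
  assert (Hreflect : RInt (ell_integrand k) (PI / 2) PI = ellK k).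
  { assert (H := RInt_comp_lin (ell_integrand k) (-1) PI (PI / 2) 0
      (ex_RInt_ell_integrand _ _)).
    replace (-1 * (PI / 2) + PI) with (PI / 2) in H by field.
    replace (-1 * 0 + PI) with PI in H by ring.
    unfold ellK. rewrite ellF_RInt, <- H.
    rewrite <- (opp_RInt_swap _ (PI / 2) 0) by apply ex_RInt_ell_integrand.
    rewrite <- RInt_opp by apply ex_RInt_ell_integrand.
    apply RInt_ext. intros x _.
    unfold scal, opp; simpl; unfold mult; simpl.
    replace (-1 * x + PI) with (PI - x) by ring.
    rewrite ell_integrand_PI_sub. ring. }
  rewrite <- (ellF_Chasles PI (2 * PI)), Hshift, <- (ellF_Chasles (PI / 2) PI), Hreflect.
  unfold ellK. ring.
Qed.

Lemma ellK_le_of_ellF_le (theta : R) : 0 <= theta <= PI / 2 ->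
  3 * ellF theta k <= 2 * ellK k -> ellK k <= 9 * cos theta / sqrt (1 - k ^ 2).
Proof.
  intros Htheta HF.
  assert (Hsqrt : 0 < sqrt (1 - k ^ 2)) by (apply sqrt_lt_R0; lra).
  assert (Htail : RInt (ell_integrand k) theta (PI / 2) <= (PI / 2 - theta) * / sqrt (1 - k ^ 2)).
  { eapply Rle_trans; [apply Rle_abs|].
    apply abs_RInt_le_const; [lra | apply ex_RInt_ell_integrand |].
    intros t _. rewrite Rabs_pos_eq by apply Rlt_le, ell_integrand_gt0.
    apply ell_integrand_le. }
  assert (Hcos : PI / 2 - theta <= 3 * cos theta).
  { rewrite <- sin_shift. pose proof PI_4.
    pose proof (sin_ge_third (PI / 2 - theta) ltac:(lra)). lra. }
  pose proof (ellF_Chasles theta (PI / 2)) as HK. fold (ellK k) in HK.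
  apply (Rmult_le_reg_r (sqrt (1 - k ^ 2))); [exact Hsqrt|].
  unfold Rdiv. rewrite Rmult_assoc, Rinv_l, Rmult_1_r by lra.
  assert (HtailK : RInt (ell_integrand k) theta (PI / 2) * sqrt (1 - k ^ 2) <= 3 * cos theta).
  { apply (Rmult_le_compat_r (sqrt (1 - k ^ 2))) in Htail; [|lra].
    rewrite Rmult_assoc, Rinv_l, Rmult_1_r in Htail by lra. lra. }
  nra.
Qed.

End EllipticIntegral.

Lemma k_lam_sq (a b lam : R) : b <= a -> 0 < lam < b ->
  k_lam a b lam ^ 2 = (a ^ 2 - b ^ 2) / (a ^ 2 - lam ^ 2).
Proof. intros Hab Hlam. apply pow2_sqrt, Rdiv_le_0_compat; nra. Qed.

Lemma k_lam_sq_lt1 (a b lam : R) : b <= a -> 0 < lam < b -> k_lam a b lam ^ 2 < 1.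
Proof.
  intros Hab Hlam. rewrite k_lam_sq by assumption.
  apply (Rmult_lt_reg_r (a ^ 2 - lam ^ 2)); [nra|].
  unfold Rdiv. rewrite Rmult_assoc, Rinv_l by nra. nra.
Qed.

Lemma asin_ratio_bounds (b lam : R) : 0 < lam < b -> 0 <= asin (lam / b) <= PI / 2.
Proof.
  intros Hlam.
  assert (Hlb : 0 < lam / b < 1).
  { split; [apply Rdiv_lt_0_compat; lra|].
    apply (Rmult_lt_reg_r b); [lra|]. unfold Rdiv. rewrite Rmult_assoc, Rinv_l; lra. }
  pose proof (asin_bound (lam / b)).
  split; [|lra].
  apply sin_incr_0; try lra.
  rewrite sin_0, sin_asin; lra.
Qed.

Lemma cos_asin_ratio_le (a b lam : R) : b <= a -> 0 < lam < b ->
  cos (asin (lam / b)) <= a / b * sqrt (1 - k_lam a b lam ^ 2).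
Proof.
  intros Hab Hlam.
  assert (Hlb : -1 <= lam / b <= 1).
  { split; [apply Rle_trans with 0; [lra | apply Rlt_le, Rdiv_lt_0_compat; lra]|].
    apply (Rmult_le_reg_r b); [lra|]. unfold Rdiv. rewrite Rmult_assoc, Rinv_l; lra. }
  rewrite cos_asin by exact Hlb.
  rewrite <- (sqrt_pow2 (a / b)) by (apply Rlt_le, Rdiv_lt_0_compat; lra).
  rewrite <- sqrt_mult_alt by apply pow2_ge_0.
  apply sqrt_le_1_alt. rewrite k_lam_sq by assumption.
  assert (E : (a / b) ^ 2 * (1 - (a ^ 2 - b ^ 2) / (a ^ 2 - lam ^ 2)) - (1 - (lam / b)²)
             = (b ^ 2 - lam ^ 2) * lam ^ 2 / (b ^ 2 * (a ^ 2 - lam ^ 2))).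
  { unfold Rsqr. field. split; nra. }
  assert (0 <= (b ^ 2 - lam ^ 2) * lam ^ 2 / (b ^ 2 * (a ^ 2 - lam ^ 2))).
  { apply Rdiv_le_0_compat; [apply Rmult_le_pos; [nra | apply pow2_ge_0] |].
    apply Rmult_lt_0_compat; nra. }
  lra.
Qed.

Lemma ellK_k_lam_le (a b lam : R) (q : nat) : b <= a -> 0 < lam < b ->
  (3 <= q)%nat -> omega_lam a b lam = / INR q -> ellK (k_lam a b lam) <= 9 * a / b.
Proof.
  intros Hab Hlam Hq Homega.
  pose proof (k_lam_sq_lt1 a b lam Hab Hlam) as Hk.
  pose proof (cos_asin_ratio_le a b lam Hab Hlam) as Hcos.
  set (k := k_lam a b lam) in *.
  assert (Hq3 : 3 <= INR q) by (apply (le_INR 3) in Hq; simpl in Hq; lra).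
  assert (HK := ellK_gt0 k Hk).
  assert (HF : 3 * ellF (asin (lam / b)) k <= 2 * ellK k).
  { replace (ellF (asin (lam / b)) k) with (omega_lam a b lam * (2 * ellK k))
      by (unfold omega_lam; fold k; field; lra).
    rewrite Homega.
    assert (/ INR q <= / 3) by (apply Rinv_le_contravar; lra). nra. }
  eapply Rle_trans;
    [exact (ellK_le_of_ellF_le k Hk _ (asin_ratio_bounds b lam Hlam) HF)|].
  assert (Hsqrt : 0 < sqrt (1 - k ^ 2)) by (apply sqrt_lt_R0; lra).
  apply (Rmult_le_reg_r (sqrt (1 - k ^ 2))); [exact Hsqrt|].
  unfold Rdiv in *. rewrite Rmult_assoc, Rinv_l by lra. nra.
Qed.

Lemma sup_norm_ge0 (u : R -> R) : 0 <= sup_norm u.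
Proof.
  unfold sup_norm.
  set (E := fun y => exists x, 0 <= x <= 2 * PI /\ y = Rabs (u x)).
  destruct (Lub_Rbar_correct E) as [Hub _].
  assert (HE : E (Rabs (u 0))) by (exists 0; split; [pose proof PI_RGT_0; lra | reflexivity]).
  specialize (Hub _ HE). pose proof (Rabs_pos (u 0)).
  destruct (Lub_Rbar E); simpl in *; lra.
Qed.

Lemma Rabs_le_sup_norm (u : R -> R) (x : R) : (forall t, continuous u t) ->
  0 <= x <= 2 * PI -> Rabs (u x) <= sup_norm u.
Proof.
  intros Hu Hx. unfold sup_norm.
  set (E := fun y => exists x, 0 <= x <= 2 * PI /\ y = Rabs (u x)).
  destruct (continuity_ab_maj (fun t => Rabs (u t)) 0 (2 * PI)) as [xmax [Hmax _]].
  { pose proof PI_RGT_0; lra. }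
  { intros t _. apply continuity_pt_filterlim, continuous_Rabs_comp, Hu. }
  destruct (Lub_Rbar_correct E) as [Hub Hlub].
  assert (Hbounded : is_ub_Rbar E (Rabs (u xmax))) by (intros y [t [Ht ->]]; apply Hmax, Ht).
  specialize (Hub (Rabs (u x)) (ex_intro _ x (conj Hx eq_refl))).
  specialize (Hlub _ Hbounded).
  destruct (Lub_Rbar E); simpl in *; easy.
Qed.

(* [c_q q k phi] is convertible to [cos (ell_freq q k * ellF phi k) * ell_integrand k phi],
   and [s_q q k phi] to the same expression with [sin]. *)
Definition ell_freq (q : nat) (k : R) : R := 2 * PI * INR q / (4 * ellK k).

Lemma abs_RInt_oscillating_le (u u' f : R -> R) (k : R) (q : nat) :
  k ^ 2 < 1 -> (0 < q)%nat ->
  (forall x, is_derive u x (u' x)) -> (forall x, continuous u' x) ->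
  (forall x, Rabs (u x) <= 1) -> u (2 * PI * INR q) = u 0 ->
  C1_periodic f ->
  Rabs (RInt (fun phi => f phi * (u' (ell_freq q k * ellF phi k) * ell_integrand k phi))
    0 (2 * PI)) <= 4 * ellK k * sup_norm (Derive f) / INR q.
Proof.
  intros Hk Hq Hu Hu' Hu1 Hu_end [Hf [Hf' Hf_per]].
  pose proof (ellK_gt0 k Hk) as HK.
  assert (Hq0 : 0 < INR q) by (apply lt_0_INR; lia).
  set (w := ell_freq q k).
  assert (Hw : 0 < w).
  { unfold w, ell_freq. pose proof PI_RGT_0. apply Rdiv_lt_0_compat; nra. }
  assert (Hphase : forall x, is_derive (fun y => w * ellF y k) x (w * ell_integrand k x))
    by (intros x; apply is_derive_scal, is_derive_ellF, Hk).
  assert (Hf_end : f (2 * PI) = f 0) by (rewrite <- (Hf_per 0); f_equal; ring).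
  eapply Rle_trans.
  - apply (abs_RInt_mul_derive_le f (fun x => / w * u (w * ellF x k)) _ 0 (2 * PI)
      (sup_norm (Derive f)) (/ w)).
    + pose proof PI_RGT_0; lra.
    + intros x _. split; [apply Hf | apply Hf'].
    + intros x _. split.
      * replace (u' (w * ellF x k) * ell_integrand k x)
          with (/ w * scal (w * ell_integrand k x) (u' (w * ellF x k)))
          by (unfold scal; simpl; unfold mult; simpl; field; lra).
        apply is_derive_scal, (is_derive_comp u (fun y => w * ellF y k)); [apply Hu | apply Hphase].
      * apply (continuous_mult (fun x => u' (w * ellF x k)) (ell_integrand k));
          [|apply continuous_ell_integrand, Hk].
        apply (continuous_comp (fun y => w * ellF y k) u'); [|apply Hu'].
        apply (ex_derive_continuous (fun y => w * ellF y k)).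
        eexists; apply Hphase.
    + rewrite Hf_end, ellF_2PI, ellF_0, Rmult_0_r by exact Hk.
      replace (w * (4 * ellK k)) with (2 * PI * INR q) by (unfold w, ell_freq; field; lra).
      rewrite Hu_end. reflexivity.
    + intros x Hx. apply Rabs_le_sup_norm; [exact Hf' | exact Hx].
    + intros x _. rewrite Rabs_mult, Rabs_inv, Rabs_pos_eq by lra.
      rewrite <- (Rmult_1_r (/ w)) at 2.
      apply Rmult_le_compat_l; [apply Rlt_le, Rinv_0_lt_compat, Hw | apply Hu1].
  - right. unfold w, ell_freq. pose proof PI_RGT_0. field. repeat split; lra.
Qed.

Theorem lemma10 :
  forall a b : R, 0 < b -> b <= a ->
  exists C : R,
    forall f : R -> R, C1_periodic f ->
    forall (q : nat) (lam : R), (3 <= q)%nat ->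
      0 < lam < b -> omega_lam a b lam = / INR q ->
      Rabs (RInt (fun phi => f phi * c_q q (k_lam a b lam) phi) 0 (2 * PI))
        <= C * C1_norm f / INR q /\
      Rabs (RInt (fun phi => f phi * s_q q (k_lam a b lam) phi) 0 (2 * PI))
        <= C * C1_norm f / INR q.
Proof.
  intros a b _ Hab. exists (36 * a / b).
  intros f Hf q lam Hq Hlam Homega.
  pose proof (k_lam_sq_lt1 a b lam Hab Hlam) as Hk.
  assert (Hq0 : (0 < q)%nat) by lia.
  assert (Hbound : 4 * ellK (k_lam a b lam) * sup_norm (Derive f) / INR q
                   <= 36 * a / b * C1_norm f / INR q).
  { pose proof (ellK_k_lam_le a b lam q Hab Hlam Hq Homega).
    pose proof (sup_norm_ge0 f). pose proof (sup_norm_ge0 (Derive f)).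
    assert (0 < / INR q) by (apply Rinv_0_lt_compat, lt_0_INR; lia).
    unfold C1_norm, Rdiv in *.
    apply Rmult_le_compat_r; [lra|].
    apply Rmult_le_compat; [pose proof (ellK_gt0 _ Hk); lra | lra | lra | lra]. }
  split; (eapply Rle_trans; [|exact Hbound]).
  - apply (abs_RInt_oscillating_le sin cos f); auto.
    + intros; apply is_derive_sin.
    + intros; apply continuous_cos.
    + intros; apply Rabs_le, SIN_bound.
    + replace (2 * PI * INR q) with (0 + 2 * INR q * PI) by ring. apply sin_period.
  - apply (abs_RInt_oscillating_le (fun x => - cos x) sin f); auto.
    + intros; auto_derive; [exact I | ring].
    + intros; apply continuous_sin.
    + intros; rewrite Rabs_Ropp; apply Rabs_le, COS_bound.
    + replace (2 * PI * INR q) with (0 + 2 * INR q * PI) by ring. now rewrite cos_period.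
Qed.
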